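(* Fix $\nu\ge1$ and let $\{a_{ij}\},\{b_{jk}\},\{c_{ik}\}\in\mathcal B$ (notation in the context). Let $\{t_{ijk}\}\in\mathcal T(\{a_{ij}\},\{b_{jk}\},\{c_{ik}\})$, with $t^*_{jjj}$ as defined in the context. Then: (a) $a^*_{jj}+b^*_{jj}-t^*_{jjj}\ge 0$ for every $j$; (b) if $a^*_{jj}+b^*_{jj}-t^*_{jjj}=0$ for all $j$, then $a_{ij}+b_{ij}=c_{ij}$ for all $i\ne j$.
   Context: $\mathcal B$ is the set of collections $\{a_{ij}\}$ of nonnegative integers indexed by pairs $i\ne j$ in $\{1,\dots,\nu\}$ such that $\sum_{i:i\ne j}a_{ij}=\sum_{i:i\ne j}a_{ji}$ for every $j$; for such a collection put $a^*_{jj}:=\sum_{i:i\ne j}a_{ji}=\sum_{i:i\ne j}a_{ij}$ (similarly $b^*_{jj}$, $c^*_{jj}$). For $\{a_{ij}\},\{b_{jk}\},\{c_{ik}\}\in\mathcal B$, $\mathcal T(\{a_{ij}\},\{b_{jk}\},\{c_{ik}\})$ is the set of collections $\{t_{ijk}\}$ of nonnegative integers indexed by triples $(i,j,k)\in\{1,\dots,\nu\}^3$ not of the form $(j,j,j)$, such that $\sum_i t_{ijk}=b_{jk}$ for $j\ne k$; $\sum_j t_{ijk}=c_{ik}$ for $i\ne k$; $\sum_k t_{ijk}=a_{ij}$ for $i\ne j$; and for every $j$, $$a^*_{jj}+\sum_{k:k\ne j}t_{jjk}=b^*_{jj}+\sum_{i:i\ne j}t_{ijj}=c^*_{jj}+\sum_{m:m\ne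 j}t_{jmj};$$ this common value is denoted $t^*_{jjj}$. *)

From mathcomp Require Import all_boot all_order all_algebra.
Set Implicit Arguments. Unset Strict Implicit. Unset Printing Implicit Defensive.

(* Indices 1..nu are represented by 'I_nu.  A collection {a_ij}_{i<>j} is a
   function 'I_nu -> 'I_nu -> nat whose diagonal values are irrelevant (never
   used); similarly {t_ijk} is a function on triples whose values at (j,j,j)
   are never used. *)

Definition inB (nu : nat) (a : 'I_nu -> 'I_nu -> nat) : Prop :=
  forall j : 'I_nu, \sum_(i | i != j) a i j = \sum_(i | i != j) a j i.

Definition star (nu : nat) (a : 'I_nu -> 'I_nu -> nat) (j : 'I_nu) : nat :=
  \sum_(i | i != j) a j i.

Definition inT (nu : nat) (a b c : 'I_nu -> 'I_nu -> nat)
  (t : 'I_nu -> 'I_nu -> 'I_nu -> nat) : Prop :=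
  [/\ (forall j k : 'I_nu, j != k -> \sum_i t i j k = b j k),
      (forall i k : 'I_nu, i != k -> \sum_j t i j k = c i k),
      (forall i j : 'I_nu, i != j -> \sum_k t i j k = a i j) &
      (forall j : 'I_nu,
         star a j + \sum_(k | k != j) t j j k = star b j + \sum_(i | i != j) t i j j /\
         star b j + \sum_(i | i != j) t i j j = star c j + \sum_(m | m != j) t j m j)].

(* t^*_{jjj} := the common value, i.e. a^*_{jj} + sum_{k<>j} t_{jjk} *)
Definition tstar (nu : nat) (a : 'I_nu -> 'I_nu -> nat)
  (t : 'I_nu -> 'I_nu -> 'I_nu -> nat) (j : 'I_nu) : nat :=
  star a j + \sum_(k | k != j) t j j k.

From mathcomp Require Import all_boot all_order all_algebra.
From mathcomp Require Import zify.

(* Using only the b-marginals of t, a^*_jj + b^*_jj - t^*_jjj equals the total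
   mass of the t_ijk with middle index j and both outer indices different from
   j, hence is nonnegative.  If it vanishes for every j, then t_ijk = 0 unless
   j = i or j = k, and the three marginal conditions collapse, for i <> k, to
   a_ik = t_ikk, b_ik = t_iik and c_ik = t_iik + t_ikk. *)

Section CrossMass.

Context {nu : nat} (t : 'I_nu -> 'I_nu -> 'I_nu -> nat).

Definition cross_mass (j : 'I_nu) : nat :=
  \sum_(k | k != j) \sum_(i | i != j) t i j k.

Lemma star_marginal_split {b : 'I_nu -> 'I_nu -> nat} {j} :
  (forall k, j != k -> \sum_i t i j k = b j k) ->
  star b j = \sum_(k | k != j) t j j k + cross_mass j.
Proof.
move=> tb; rewrite /star /cross_mass -big_split; apply: eq_bigr => k kj.
by rewrite -tb 1?eq_sym // (bigD1 j).
Qed.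

Lemma star_tstar_defect (a : 'I_nu -> 'I_nu -> nat) {b} {j} :
  (forall k, j != k -> \sum_i t i j k = b j k) ->
  ((star a j)%:Z + (star b j)%:Z - (tstar a t j)%:Z = (cross_mass j)%:Z)%R.
Proof. by move=> tb; rewrite /tstar (star_marginal_split tb) !PoszD; lia. Qed.

Lemma cross_mass_eq0P j :
  cross_mass j = 0 -> forall i k, i != j -> k != j -> t i j k = 0.
Proof.
rewrite /cross_mass => /eqP; rewrite sum_nat_eq0 => /forall_inP t0 i k ij kj.
by move: (t0 k kj); rewrite sum_nat_eq0 => /forall_inP/(_ i ij)/eqP.
Qed.

Hypothesis t_outer : forall i j k, i != j -> k != j -> t i j k = 0.

Lemma sum_last_outer i j : i != j -> \sum_k t i j k = t i j j.
Proof. by move=> ij; rewrite (big_only1 j) // => k kj _; rewrite t_outer. Qed.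

Lemma sum_first_outer j k : j != k -> \sum_i t i j k = t j j k.
Proof.
by move=> jk; rewrite (big_only1 j) // => i ij _; rewrite t_outer // eq_sym.
Qed.

Lemma sum_middle_outer i k : i != k -> \sum_j t i j k = t i i k + t i k k.
Proof.
move=> ik; have ki : k != i by rewrite eq_sym.
rewrite (bigD1 i) //= (big_only1 k) // => j jk ji.
by apply: t_outer; rewrite eq_sym.
Qed.

End CrossMass.

Local Open Scope ring_scope.

Theorem lemma3 (nu : nat) (hnu : (1 <= nu)%N)
  (a b c : 'I_nu -> 'I_nu -> nat) (t : 'I_nu -> 'I_nu -> 'I_nu -> nat) :
  inB a -> inB b -> inB c -> inT a b c t ->
  (forall j : 'I_nu,
     0 <= (star a j)%:Z + (star b j)%:Z - (tstar a t j)%:Z) /\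
  ((forall j : 'I_nu,
      (star a j)%:Z + (star b j)%:Z - (tstar a t j)%:Z = 0) ->
   forall i j : 'I_nu, i != j -> (a i j + b i j)%N = c i j).
Proof.
move=> _ _ _ [tb tc ta _].
have defect j := star_tstar_defect t a (tb j).
split=> [j | defect0]; first by rewrite defect.
have t_outer : forall i j k, i != j -> k != j -> t i j k = 0.
  move=> i j k; apply: (cross_mass_eq0P t); apply/eqP.
  by rewrite -eqz_nat -defect defect0.
move=> i k ik.
rewrite -ta // -tb // -tc // sum_middle_outer // sum_last_outer //.
by rewrite sum_first_outer // addnC.
Qed.
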